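(* Consider the rendezvous game on a connected graph $G$ against Divider with exactly one agent $D_1$. Suppose that at some moment when it is Facilitator's turn to move, $R$ and $J$ occupy vertices of a cycle $C$ of $G$ that has a shortcut. Then Facilitator has a strategy such that after at most $\ell(C)$ of his moves, $R$ and $J$ occupy vertices of a cycle $C'$ of $G$ with $\ell(C')<\ell(C)$.
   Context: Rendezvous game with adversaries. Let $G$ be a finite, simple, undirected, connected graph, let $s,t\in V(G)$ and let $k\ge 1$ be an integer. Two players play: Facilitator, who controls two agents $R$ and $J$ initially placed on $s$ and $t$ respectively, and Divider, who controls $k$ agents $D_1,\dots,D_k$ which Divider initially places on vertices of $V(G)\setminus\{s,t\}$ of his choice (several agents may share a vertex). After the initial placement the players alternate moves, Facilitator moving first. In a move, the player moves each of his agents to an adjacent vertex or leaves it where it is; no agent may be moved to a vertex currently occupied by an agent of the opponent. Both players have full information. Facilitator wins if at some moment $R$ and $J$ occupy the same vertex; Divider wins if this never happens. $\ell(P)$, $\ell(C)$ denote the number of edges of a path $P$ or cycle $C$. For a cycle $C$ of $G$ and distinct $u,v\in V(C)$, let $P_1,P_2$ be the two internally vertex-disjoint $(u,v)$-paths contained in $C$. $C$ has a $(u,v)$-shortcut if there is a $(u,v)$-path $P$ in $G-(V(C)\setminus\{u,v\})$ with $\ell(P)<\ell(P_1)$ and $\ell(P)<\ell(P_2)$; $C$ has a shortcut if it has a $(u,v)$-shortcut for some distinct $u,v\in V(C)$. *)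

From mathcomp Require Import all_boot.
Set Implicit Arguments. Unset Strict Implicit. Unset Printing Implicit Defensive.

Definition simple_graph (T : finType) (e : rel T) : Prop :=
  symmetric e /\ irreflexive e.

Definition connected_graph (T : finType) (e : rel T) : Prop :=
  forall x y : T, connect e x y.

(* A cycle of G is given by the cyclic sequence of its (distinct) vertices,
   at least 3 of them, consecutive ones (cyclically) adjacent.
   Its length l(C) is the number of edges = size c. *)
Definition is_cycle (T : finType) (e : rel T) (c : seq T) : Prop :=
  [/\ 3 <= size c, uniq c & cycle e c].

(* (u,v)-path P in G - (V(C) \ {u,v}): P = u :: p, simple, ending at v,
   whose vertices other than u and v avoid V(C).  l(P) = size p. *)
Definition avoiding_path (T : finType) (e : rel T) (c : seq T) (u v : T)
    (p : seq T) : Prop :=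
  [/\ path e u p, last u p = v, uniq (u :: p)
    & forall x, x \in p -> x != v -> x \notin c].

(* For distinct u, v on the cycle c, the two (u,v)-paths contained in the
   cycle have lengths size (arc c u v) and size (arc c v u). *)
Definition has_shortcut_at (T : finType) (e : rel T) (c : seq T) (u v : T)
    : Prop :=
  [/\ u \in c, v \in c, u != v &
    exists p, avoiding_path e c u v p /\
      size p < size (arc c u v) /\ size p < size (arc c v u)].

Definition has_shortcut (T : finType) (e : rel T) (c : seq T) : Prop :=
  exists u v, has_shortcut_at e c u v.

Definition fac_move (T : finType) (e : rel T) (d r j r' j' : T) : bool :=
  [&& (r' == r) || e r r', (j' == j) || e j j', r' != d & j' != d].

Definition div_move (T : finType) (e : rel T) (r j d d' : T) : bool :=
  [&& (d' == d) || e d d', d' != r & d' != j].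

(* fac_forces e n goal r j d : in position (R=r, J=j, D=d) with Facilitator
   to move, Facilitator has a strategy guaranteeing that [goal R J] holds
   now or after at most n of his moves, whatever Divider does (game tree
   formulation of a finite-horizon strategy; Facilitator's choices may
   depend on the whole history). *)
Fixpoint fac_forces (T : finType) (e : rel T) (n : nat)
    (goal : T -> T -> Prop) (r j d : T) : Prop :=
  goal r j \/
  match n with
  | 0 => False
  | n'.+1 => exists r' j', fac_move e d r j r' j' /\
      forall d', div_move e r' j' d d' -> fac_forces e n' goal r' j' d'
  end.

From mathcomp Require Import all_boot zify.
Set Implicit Arguments. Unset Strict Implicit. Unset Printing Implicit Defensive.

(* Rotate the cycle C so that it reads u :: A ++ v :: B, where
   u, v are the ends of a shortcut p; A and B are the two open arcs of C
   between u and v, and |p| is shorter than both closed arcs.  Closing each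
   closed arc with p gives a cycle shorter than C (shortcut_cycle), so as soon
   as R and J both lie on the closed arc u..A..v, or both on v..B..u, they lie
   on a shorter cycle (closed_arcs_on_shorter_cycles).
   Otherwise one agent is inside A and the other inside B.  Facilitator then
   walks both agents forward along C (in the direction u -> A -> v -> B -> u),
   except that an agent whose next vertex is occupied by the Divider agent
   waits.  Since R and J are distinct, at most one of them is blocked, so the
   total number of forward steps the agents still need to reach {u, v}
   (ends_dist) drops by at least one per move (advance_dist).  This total
   is at most |A| + |B| < |C| at the start, hence after fewer than |C| moves
   both agents are on a common closed arc (chase_wins). *)

Definition on_closed_arc (T : eqType) (u v : T) (A B : seq T) (r j : T) : bool :=
  ((r \in u :: v :: A) && (j \in u :: v :: A)) ||
  ((r \in v :: u :: B) && (j \in v :: u :: B)).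

Section Shortcuts.
Variables (T : finType) (e : rel T).

(* Replacing the arc x..X..y of a cycle by a strictly shorter path x..q..y
   that avoids the cycle yields a shorter cycle containing the other arc;
   the bound |q| < |Y| guarantees that the new cycle has length at least 3. *)
Lemma shortcut_cycle (x y : T) (X Y q : seq T) (c := x :: X ++ y :: Y) :
  uniq c -> cycle e c -> avoiding_path e c x y (rcons q y) ->
  size q < size X -> size q < size Y ->
  [/\ is_cycle e (y :: Y ++ x :: q), size (y :: Y ++ x :: q) < size c
    & {subset y :: x :: Y <= y :: Y ++ x :: q}].
Proof.
move=> uc cc [pth _ uq avoid] qX qY; rewrite /c /= !size_cat /=.
have [xY yY UY] : [/\ x \notin Y, y \notin Y & uniq Y].
  move: uc; rewrite /c /= mem_cat !inE cat_uniq /= !negb_or.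
  by move=> /and5P[/and3P[_ _ ->] _ _ -> ->].
have [yxq Uxq] : y \notin x :: q /\ uniq (x :: q).
  by move: uq; rewrite -rcons_cons rcons_uniq => /andP.
have disjYq : ~~ has (mem Y) (x :: q).
  apply/hasPn => w; rewrite inE => /orP[/eqP-> // | wq].
  have wy : w != y by apply: contraNneq yxq => <-; rewrite inE wq orbT.
  have wp : w \in rcons q y by rewrite mem_rcons inE wq orbT.
  by move: (avoid w wp wy); apply: contra => /= wY; rewrite /c inE mem_cat inE wY !orbT.
have [pY eYx] : path e y Y /\ e (last y Y) x.
  by move: cc; rewrite /c /= rcons_cat cat_path /= rcons_path => /and3P[_ _ /andP].
split.
- split; first by rewrite /= size_cat /= addnS !ltnS addn_gt0 (leq_ltn_trans (leq0n _) qY).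
  + by rewrite /= mem_cat negb_or yY yxq cat_uniq UY disjYq.
  + by rewrite /= rcons_cat cat_path pY /= eYx.
- by rewrite ltnS !addnS ltnS [size Y + _]addnC ltn_add2r.
- by move=> w; rewrite !inE mem_cat !inE => /or3P[->|->|->]; rewrite ?orbT.
Qed.

Lemma avoiding_path_memE (c1 c2 : seq T) x y p :
  c1 =i c2 -> avoiding_path e c1 x y p -> avoiding_path e c2 x y p.
Proof. by move=> c12 [? ? ? avoid]; split=> // w wp wy; rewrite -c12 avoid. Qed.

Lemma avoiding_path_rev (c q : seq T) x y : symmetric e ->
  avoiding_path e c x y (rcons q y) -> avoiding_path e c y x (rcons (rev q) x).
Proof.
move=> sym_e [pth _ uq avoid].
have yq : y \notin q by move: uq; rewrite -rcons_cons rcons_uniq inE negb_or => /andP[/andP[]].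
rewrite -rev_cons; split.
- rewrite -(belast_rcons x q y) -{1}(last_rcons x q y) rev_path.
  by rewrite (@eq_path _ _ e) // => a b; rewrite /= sym_e.
- by rewrite rev_cons last_rcons.
- by rewrite -rev_rcons rev_uniq rcons_cons.
- move=> w; rewrite mem_rev inE => /orP[/eqP-> | wq]; first by rewrite eqxx.
  by move=> _; apply: avoid; rewrite ?mem_rcons ?inE ?wq ?orbT //; apply: contraNneq yq => <-.
Qed.

Lemma closed_arcs_on_shorter_cycles (u v : T) (A B p : seq T)
    (s := u :: A ++ v :: B) :
  symmetric e -> uniq s -> cycle e s -> avoiding_path e s u v p ->
  size p <= size A -> size p <= size B ->
  forall r j, on_closed_arc u v A B r j ->
  exists C', [/\ is_cycle e C', size C' < size s, r \in C' & j \in C'].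
Proof.
move=> sym_e us cs avp pA pB.
have uv : u != v by apply: contraTneq us; rewrite /s => <- /=; rewrite mem_cat inE eqxx orbT.
case/lastP: p avp pA pB => [[_ /= vu _ _] | q z avp]; first by rewrite vu eqxx in uv.
have zv : z = v by case: avp => _ <- _ _; rewrite last_rcons.
subst z; rewrite size_rcons => qA qB.
have [cyc1 sz1 sub1] := shortcut_cycle us cs avp qA qB.
have rot_s : rot (size (u :: A)) s = v :: B ++ u :: A by exact: rot_size_cat.
have us' : uniq (v :: B ++ u :: A) by rewrite -rot_s rot_uniq.
have cs' : cycle e (v :: B ++ u :: A) by rewrite -rot_s rot_cycle.
have avp' : avoiding_path e (v :: B ++ u :: A) v u (rcons (rev q) u).
  by apply: avoiding_path_rev => //; apply: avoiding_path_memE avp => w; rewrite -rot_s mem_rot.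
rewrite -(size_rev q) in qA qB.
have [cyc2 sz2 sub2] := shortcut_cycle us' cs' avp' qB qA.
rewrite -rot_s size_rot in sz2.
move=> r j /orP[/andP[rA jA] | /andP[rB jB]].
- by exists (u :: A ++ v :: rev q); split; rewrite ?sub2.
- by exists (v :: B ++ u :: q); split; rewrite ?sub1.
Qed.
End Shortcuts.

Lemma next_block (T : eqType) (A q : seq T) (w x : T) : x \in A ->
  next (A ++ w :: q) x = nth w A (index x A).+1.
Proof.
case: A => // a A xA; rewrite next_nth mem_cat xA index_cat xA.
have : index x (a :: A) <= size A by rewrite -ltnS index_mem.
move: (index x (a :: A)) => i; rewrite leq_eqVlt => /orP[/eqP-> | ltiA] /=.
  by rewrite nth_cat ltnn subnn [RHS]nth_default.
by rewrite nth_cat ltiA; apply: set_nth_default.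
Qed.

Definition steps_left (T : eqType) (A : seq T) (x : T) : nat := size A - index x A.

Lemma steps_left_next (T : eqType) (A q : seq T) (w x : T) : uniq A -> x \in A ->
  let y := next (A ++ w :: q) x in
  y = w \/ (y \in A /\ steps_left A y < steps_left A x).
Proof.
move=> UA xA /=; rewrite next_block //.
have [lt_iA | ge_iA] := ltnP (index x A).+1 (size A); last by left; rewrite nth_default.
right; split; first exact: mem_nth.
by rewrite /steps_left index_uniq //; move: lt_iA; lia.
Qed.

Section Chase.
Variables (T : finType) (e : rel T) (u v : T) (A B : seq T).
Let s := u :: A ++ v :: B.
Hypotheses (us : uniq s) (cs : cycle e s).

Lemma cycle_blocks :
  [/\ u \notin A, u \notin B, v \notin A & v \notin B] /\
  [/\ uniq A, uniq B & {in B, forall x, x \notin A}].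
Proof.
move: us; rewrite /s /= mem_cat !inE cat_uniq /= !negb_or.
move=> /and5P[/and3P[-> _ ->] -> /andP[-> /hasPn AB] -> ->].
by do !split.
Qed.

Lemma off_arcs r j : r \in s -> j \in s -> ~~ on_closed_arc u v A B r j ->
  ((r \in A) && (j \in B)) || ((r \in B) && (j \in A)).
Proof.
rewrite /on_closed_arc /s !inE !mem_cat !inE.
move: (r == u) (r == v) (r \in A) (r \in B) (j == u) (j == v) (j \in A) (j \in B).
by do 8!case.
Qed.

(* Number of forward steps from [x] to {u, v}; it vanishes at u and v. *)
Definition ends_dist (x : T) : nat :=
  if x \in A then steps_left A x else steps_left B x.

Lemma ends_dist_next x : (x \in A) || (x \in B) ->
  0 < ends_dist x /\ ends_dist (next s x) < ends_dist x.
Proof.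
have [[uA uB vA vB] [UA UB BA]] := cycle_blocks.
have ends_dist0 y : y \notin A -> y \notin B -> ends_dist y = 0.
  by move=> yA yB; rewrite /ends_dist (negbTE yA) /steps_left memNindex ?subnn.
move=> xAB; have xB : (x \in A) = false -> x \in B by move=> xA; rewrite xA in xAB.
have pos : 0 < ends_dist x.
  by rewrite /ends_dist /steps_left; case: ifP => [|/xB]; rewrite subn_gt0 index_mem.
split=> //; case xA: (x \in A).
  have rot_s : rot 1 s = A ++ v :: rcons B u by rewrite rot1_cons rcons_cat.
  rewrite -(next_rot 1 us) rot_s.
  case: (steps_left_next (rcons B u) v UA xA) => [-> | [yA]]; first by rewrite ends_dist0.
  by rewrite /ends_dist xA yA.
have s_cat : s = (u :: rcons A v) ++ B by rewrite /= cat_rcons.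
have rot_s : rot (size (u :: rcons A v)) s = B ++ u :: rcons A v by rewrite s_cat rot_size_cat.
rewrite -(next_rot (size (u :: rcons A v)) us) rot_s.
case: (steps_left_next (rcons A v) u UB (xB xA)) => [-> | [yB]]; first by rewrite ends_dist0.
by rewrite /ends_dist xA (negbTE (BA _ yB)).
Qed.

Lemma off_arc_facts r j : r \in s -> j \in s -> ~~ on_closed_arc u v A B r j ->
  [/\ (r \in A) || (r \in B), (j \in A) || (j \in B) & r != j].
Proof.
move=> rs js off; have [_ [_ _ BA]] := cycle_blocks.
case/orP: (off_arcs rs js off) => /andP[x1 x2]; rewrite x1 x2 ?orbT; split=> //.
  by apply: contraTneq x1 => ->; exact: BA.
by apply: contraTneq x2 => <-; exact: BA.
Qed.

Lemma ends_dist_sum_bound r j : ((r \in A) && (j \in B)) || ((r \in B) && (j \in A)) ->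
  ends_dist r + ends_dist j <= size A + size B.
Proof.
have [_ [_ _ BA]] := cycle_blocks.
have distA x : x \in A -> ends_dist x <= size A by move=> xA; rewrite /ends_dist xA leq_subr.
have distB x : x \in B -> ends_dist x <= size B.
  by move=> xB; rewrite /ends_dist (negbTE (BA x xB)) leq_subr.
case/orP=> /andP[x1 x2]; last rewrite addnC; exact: leq_add (distA _ _) (distB _ _).
Qed.

Definition advance (d x : T) : T := if next s x == d then x else next s x.

Lemma advance_in d x : x \in s -> advance d x \in s.
Proof. by rewrite /advance; case: ifP; rewrite ?mem_next. Qed.

Lemma advance_step d x : x \in s -> d != x ->
  ((advance d x == x) || e x (advance d x)) && (advance d x != d).
Proof.
move=> xs dx; rewrite /advance; case: ifP => [_ | /negbT nd].
  by rewrite eqxx eq_sym.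
by rewrite nd (next_cycle cs xs) orbT.
Qed.

Lemma advance_move d r j : r \in s -> j \in s -> d != r -> d != j ->
  fac_move e d r j (advance d r) (advance d j).
Proof.
move=> rs js dr dj; rewrite /fac_move.
by case/andP: (advance_step rs dr) => -> ->; case/andP: (advance_step js dj) => -> ->.
Qed.

(* Two distinct agents cannot both be blocked (successors on a cycle are
   distinct), so one move decreases the total distance to {u, v}. *)
Lemma advance_dist d r j :
  (r \in A) || (r \in B) -> (j \in A) || (j \in B) -> r != j ->
  ends_dist (advance d r) + ends_dist (advance d j) < ends_dist r + ends_dist j.
Proof.
move=> rAB jAB rj; have [pr nr] := ends_dist_next rAB; have [pj nj] := ends_dist_next jAB.
rewrite /advance; case: ifP => [/eqP rd | _]; case: ifP => [/eqP jd | _]; try lia.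
by move: rj; rewrite (can_inj (prev_next us) (etrans rd (esym jd))) eqxx.
Qed.

Variable goal : T -> T -> Prop.
Hypothesis goal_on_arc : forall r j, on_closed_arc u v A B r j -> goal r j.

Lemma chase_forces N r j d : r \in s -> j \in s -> d != r -> d != j ->
  (~~ on_closed_arc u v A B r j -> ends_dist r + ends_dist j <= N.+1) ->
  fac_forces e N goal r j d.
Proof.
elim: N r j d => [|N IH] r j d rs js dr dj bound;
  (have [arc | off] := boolP (on_closed_arc u v A B r j); first by left; exact: goal_on_arc);
  have [rAB jAB rj] := off_arc_facts rs js off; right.
  have [pr _] := ends_dist_next rAB; have [pj _] := ends_dist_next jAB.
  by have := leq_trans (leq_add pr pj) (bound off).
exists (advance d r), (advance d j); split; first exact: advance_move.
move=> d' /and3P[_ d'r d'j]; apply: IH; rewrite ?advance_in // => _.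
by rewrite -ltnS; apply: leq_trans (advance_dist d rAB jAB rj) (bound off).
Qed.

Lemma chase_wins r j d : r \in s -> j \in s -> d != r -> d != j ->
  fac_forces e (size s) goal r j d.
Proof.
move=> rs js dr dj; apply: chase_forces => // off.
by have := ends_dist_sum_bound (off_arcs rs js off); rewrite /s /= size_cat /=; lia.
Qed.
End Chase.

Theorem claim1 (T : finType) (e : rel T)
  (HG : simple_graph e) (Hconn : connected_graph e)
  (C : seq T) (HC : is_cycle e C) (Hsc : has_shortcut e C)
  (r j d : T) (Hr : r \in C) (Hj : j \in C) (Hdr : d != r) (Hdj : d != j) :
  fac_forces e (size C)
    (fun r' j' => r' = j' \/
       exists C', [/\ is_cycle e C', size C' < size C, r' \in C' & j' \in C'])
    r j d.
Proof.
case: HG => sym_e _; case: HC => _ uC cC.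
case: Hsc => u [v [uC' vC uv [p [avp [pA pB]]]]].
case: (rot_to_arc uC uC' vC uv) => i A B arcA arcB rotC.
have us : uniq (u :: A ++ v :: B) by rewrite -rotC rot_uniq.
have cs : cycle e (u :: A ++ v :: B) by rewrite -rotC rot_cycle.
have memC : C =i u :: A ++ v :: B by move=> z; rewrite -rotC mem_rot.
have -> : size C = size (u :: A ++ v :: B) by rewrite -rotC size_rot.
rewrite -arcA -arcB /= !ltnS in pA pB.
have shorter := closed_arcs_on_shorter_cycles sym_e us cs (avoiding_path_memE memC avp) pA pB.
by apply: chase_wins; rewrite -?memC // => r' j' /shorter; right.
Qed.
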